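(* Assume $\mathbb Q\subset k$ and let $R$ be a $k$-algebra. Then for every $r\in\mathcal U^p(R;\Delta)$ one has $\varepsilon(r)\in R[[{\bf s}]]_{\Delta,+}$ and $\boldsymbol\varepsilon(r):=(\varepsilon^1(r),\dots,\varepsilon^p(r))\in\mathbb H^p(R;\Delta)$, $\boldsymbol\Sigma\circ\boldsymbol\varepsilon=\varepsilon$, and the three maps $$\boldsymbol\varepsilon:\mathcal U^p(R;\Delta)\to\mathbb H^p(R;\Delta),\qquad \varepsilon:\mathcal U^p(R;\Delta)\to R[[{\bf s}]]_{\Delta,+},\qquad \boldsymbol\Sigma:\mathbb H^p(R;\Delta)\to R[[{\bf s}]]_{\Delta,+}$$ are bijective.
   Context: $k$ is a commutative ring; ${\bf s}=\{s_1,\dots,s_p\}$ commuting variables, ${\bf s}^\alpha=s_1^{\alpha_1}\cdots s_p^{\alpha_p}$. A co-ideal is a non-empty $\Delta\subset\mathbb N^p$ with $\alpha\in\Delta,\alpha'\le\alpha$ (componentwise) $\Rightarrow\alpha'\in\Delta$. For a ring $R$, $R[[{\bf s}]]_\Delta$ is the ring of formal sums $\sum_{\alpha\in\Delta}r_\alpha{\bf s}^\alpha$ with truncated product $\sum_\alpha(\sum_{\beta+\gamma=\alpha}r_\beta r'_\gamma){\bf s}^\alpha$ (variables central); $R[[{\bf s}]]_{\Delta,+}$ is the set of those with zero constant coefficient. $\mathcal U^p(R;\Delta)$ is the multiplicative group of $r\in R[[{\bf s}]]_\Delta$ with $r_0=1$; $r^*$ is the inverse. $\chi^i_R(\sum r_\alpha{\bf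 s}^\alpha)=\sum\alpha_ir_\alpha{\bf s}^\alpha$, $\boldsymbol\chi_R(\sum r_\alpha{\bf s}^\alpha)=\sum|\alpha|r_\alpha{\bf s}^\alpha$ where $|\alpha|=\alpha_1+\dots+\alpha_p$; $\varepsilon^i(r)=r^*\chi^i_R(r)$ and $\varepsilon(r)=r^*\boldsymbol\chi_R(r)$. $\mathbb H^p(R;\Delta)$ is the set of $p$-tuples $(\delta^1,\dots,\delta^p)\in(R[[{\bf s}]]_{\Delta,+})^p$, $\delta^i=\sum_\alpha\delta^i_\alpha{\bf s}^\alpha$, such that (a) $\delta^i_\alpha=0$ whenever $\alpha_i=0$, and (b) $\chi^j_R(\delta^i)-\chi^i_R(\delta^j)=[\delta^i,\delta^j]$ for all $i,j$. The map $\boldsymbol\Sigma$ sends $(\delta^1,\dots,\delta^p)$ to $\sum_i\delta^i$. *)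

From HB Require Import structures.
From mathcomp Require Import all_boot all_order all_algebra.
From Stdlib Require Import ClassicalEpsilon.
Set Implicit Arguments. Unset Strict Implicit. Unset Printing Implicit Defensive.
Import Order.TTheory GRing.Theory Num.Theory.
Local Open Scope ring_scope.

Definition mi (p : nat) := {ffun 'I_p -> nat}.
Definition mi0 (p : nat) : mi p := [ffun _ => 0%N].
Definition mi_le p (a b : mi p) : bool := [forall i, (a i <= b i)%N].
Definition mi_abs p (a : mi p) : nat := (\sum_(i < p) a i)%N.

Definition coideal p (D : pred (mi p)) : Prop :=
  (exists a, D a) /\ (forall a b : mi p, D a -> mi_le b a -> D b).

(* formal sums sum_alpha r_alpha s^alpha : coefficient functions *)
Definition ser (R : Type) (p : nat) := mi p -> R.

Section Ser.
Variables (R : nzRingType) (p : nat) (D : pred (mi p)).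

(* element of R[[s]]_D : coefficients supported in D *)
Definition inSer (f : ser R p) : Prop := forall a, ~~ D a -> f a = 0.
Definition inSerPlus (f : ser R p) : Prop := inSer f /\ f (mi0 p) = 0.

Definition serAdd (f g : ser R p) : ser R p := fun a => f a + g a.
Definition serSub (f g : ser R p) : ser R p := fun a => f a - g a.

(* truncated product: sum over beta + gamma = alpha, i.e. beta <= alpha *)
Definition serMul (f g : ser R p) : ser R p := fun a =>
  if D a then
    \sum_(b : {ffun 'I_p -> 'I_(mi_abs a).+1} | [forall i, (b i <= a i)%N])
       f [ffun i => (b i : nat)] * g [ffun i => (a i - b i)%N]
  else 0.

Definition serOne : ser R p := fun a => if (a == mi0 p) && D a then 1 else 0.

Definition inU (r : ser R p) : Prop := inSer r /\ r (mi0 p) = 1.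

Definition serInv (r : ser R p) : ser R p :=
  epsilon (inhabits (fun _ => 0))
    (fun s => inSer s /\ serMul r s = serOne /\ serMul s r = serOne).

Definition chi (i : 'I_p) (f : ser R p) : ser R p := fun a => (a i)%:R * f a.
Definition chiB (f : ser R p) : ser R p := fun a => (mi_abs a)%:R * f a.

Definition eps_i (i : 'I_p) (r : ser R p) : ser R p := serMul (serInv r) (chi i r).
Definition eps (r : ser R p) : ser R p := serMul (serInv r) (chiB r).
Definition epsV (r : ser R p) : 'I_p -> ser R p := fun i => eps_i i r.

Definition bracket (f g : ser R p) : ser R p := serSub (serMul f g) (serMul g f).

Definition inH (d : 'I_p -> ser R p) : Prop :=
  (forall i, inSerPlus (d i)) /\
  (forall i (a : mi p), a i = 0%N -> d i a = 0) /\
  (forall i j, serSub (chi j (d i)) (chi i (d j)) = bracket (d i) (d j)).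

Definition Sigma (d : 'I_p -> ser R p) : ser R p := fun a => \sum_(i < p) d i a.
End Ser.

Definition bij_on (X Y : Type) (A : X -> Prop) (B : Y -> Prop) (f : X -> Y) : Prop :=
  (forall x, A x -> B (f x)) /\
  (forall x y, A x -> A y -> f x = f y -> x = y) /\
  (forall y, B y -> exists x, A x /\ f x = y).

(* Each chi^i is a derivation of R[[s]]_D, so eps r = r^* chiB(r) is a
   logarithmic derivative: chiB(r) = r eps(r). Since r has constant term 1 and
   eps(r) none, this equation determines |a| r_a from the coefficients of r of
   lower degree; dividing by |a| (Q is contained in k) makes eps injective, and
   solving it degree by degree makes eps surjective. Differentiating r^* r = 1
   gives chi^j(r^* ) = - r^* chi^j(r) r^*, from which the components eps^i
   satisfy the zero-curvature equations defining H. Summing those equations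
   over j gives |a| d_i = a_i Sigma(d) + [d_i, Sigma(d)] for d in H, so Sigma
   is injective on H by the same induction; as Sigma o epsV = eps, bijectivity
   of epsV and Sigma follows formally. *)

From HB Require Import structures.
From mathcomp Require Import all_boot all_order all_algebra.
From mathcomp Require Import zify.
From Stdlib Require Import ClassicalEpsilon FunctionalExtensionality.
Import GRing.Theory.
Local Open Scope ring_scope.
Set Implicit Arguments. Unset Strict Implicit.

Lemma val_inord N m : ((inord m : 'I_N.+1) : nat) = if (m < N.+1)%N then m else 0%N.
Proof. by rewrite /inord val_insubd. Qed.

Section MultiIndex.
Variable p : nat.

Definition mi_of N (b : {ffun 'I_p -> 'I_N}) : mi p := [ffun i => (b i : nat)].
Definition mi_add (a b : mi p) : mi p := [ffun i => (a i + b i)%N].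
Definition mi_sub (a b : mi p) : mi p := [ffun i => (a i - b i)%N].

Lemma mi_leP (a b : mi p) : reflect (forall i, (a i <= b i)%N) (mi_le a b).
Proof. exact: forallP. Qed.

Lemma mi_le_trans (a b c : mi p) : mi_le a b -> mi_le b c -> mi_le a c.
Proof. by move=> /mi_leP ab /mi_leP bc; apply/mi_leP=> i; apply: leq_trans (ab i) (bc i). Qed.

Lemma mi_le0 (a : mi p) : mi_le (mi0 p) a.
Proof. by apply/mi_leP=> i; rewrite ffunE. Qed.

Lemma mi_of_inj N : injective (@mi_of N).
Proof. by move=> b c /ffunP bc; apply/ffunP=> i; apply: val_inj; have := bc i; rewrite !ffunE. Qed.

Lemma mi_le_abs (a : mi p) i : (a i <= mi_abs a)%N.
Proof. by rewrite /mi_abs (bigD1 i) //= leq_addr. Qed.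

Lemma mi_le_abs_le (a b : mi p) i : mi_le b a -> (b i <= mi_abs a)%N.
Proof. by move=> /mi_leP ba; apply: leq_trans (ba i) (mi_le_abs _ _). Qed.

Lemma mi_abs0 : mi_abs (mi0 p) = 0%N.
Proof. by rewrite /mi_abs big1 // => i _; rewrite ffunE. Qed.

Lemma mi_abs_eq0 (a : mi p) : mi_abs a = 0%N -> a = mi0 p.
Proof.
by move=> a0; apply/ffunP=> i; rewrite ffunE; apply/eqP; rewrite -leqn0 -a0 mi_le_abs.
Qed.

Lemma mi_abs_prednK (a : mi p) : a != mi0 p -> (mi_abs a).-1.+1 = mi_abs a.
Proof. by move=> a0; rewrite prednK // lt0n; apply: contra a0 => /eqP/mi_abs_eq0 ->. Qed.

Lemma mi_abs_ltn (a b : mi p) : mi_le a b -> a != b -> (mi_abs a < mi_abs b)%N.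
Proof.
move=> /mi_leP ab neq_ab.
have [i ai_neq] : exists i, a i != b i.
  apply/existsP; apply: contraR neq_ab; rewrite negb_exists => /forallP eq_ab.
  by apply/eqP/ffunP=> i; apply/eqP; rewrite -[_ == _]negbK eq_ab.
rewrite /mi_abs (bigD1 i) //= [X in (_ < X)%N](bigD1 i) //= -addSn.
by apply: leq_add; [rewrite ltn_neqAle ai_neq ab | apply: leq_sum].
Qed.

Lemma mi_sub_le (a b : mi p) : mi_le (mi_sub a b) a.
Proof. by apply/mi_leP=> i; rewrite ffunE leq_subr. Qed.

Lemma mi_sub0 (a : mi p) : mi_sub a (mi0 p) = a.
Proof. by apply/ffunP=> i; rewrite !ffunE subn0. Qed.

Lemma mi_sub0l (a : mi p) : mi_sub (mi0 p) a = mi0 p.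
Proof. by apply/ffunP=> i; rewrite !ffunE. Qed.

Lemma mi_subnn (a : mi p) : mi_sub a a = mi0 p.
Proof. by apply/ffunP=> i; rewrite !ffunE subnn. Qed.

Lemma mi_sub_eq0 (a b : mi p) : mi_le b a -> (mi_sub a b == mi0 p) = (b == a).
Proof.
move=> /mi_leP ba; apply/eqP/eqP=> [/ffunP ab0 | ->]; last exact: mi_subnn.
by apply/ffunP=> i; have := ab0 i; have := ba i; rewrite !ffunE; move: (a i) (b i); lia.
Qed.

Lemma mi_abs_sub_ltn (a b : mi p) :
  mi_le b a -> b != mi0 p -> (mi_abs (mi_sub a b) < mi_abs a)%N.
Proof.
move=> /mi_leP ba b0; apply: mi_abs_ltn; first exact: mi_sub_le.
apply: contra b0 => /eqP/ffunP sub_ab; apply/eqP/ffunP=> i.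
by have := sub_ab i; have := ba i; rewrite !ffunE; move: (a i) (b i); lia.
Qed.

Lemma mi_addKsub (a b : mi p) : mi_sub (mi_add a b) a = b.
Proof. by apply/ffunP=> i; rewrite !ffunE addKn. Qed.

Lemma mi_subDA (a b c : mi p) : mi_sub (mi_sub a b) c = mi_sub a (mi_add b c).
Proof. by apply/ffunP=> i; rewrite !ffunE subnDA. Qed.

Lemma mi_abs_ind (P : mi p -> Prop) :
  (forall a, (forall b, (mi_abs b < mi_abs a)%N -> P b) -> P a) -> forall a, P a.
Proof.
move=> IH a; elim: (mi_abs a).+1 {-2}a (ltnSn (mi_abs a)) => [//|n IHn] b b_lt.
by apply: IH => c c_lt; apply: IHn; apply: leq_trans c_lt _.
Qed.

(* Iterating [F] from any start stabilises in degree < n after n steps. *)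
Lemma causal_fixpoint (T : Type) (F : (mi p -> T) -> mi p -> T) (x0 : mi p -> T) :
  (forall x y a, (forall b, (mi_abs b < mi_abs a)%N -> x b = y b) -> F x a = F y a) ->
  exists x, forall a, x a = F x a.
Proof.
move=> F_causal; pose it n := iter n F x0.
have it_stable n m a : (n <= m)%N -> (mi_abs a < n)%N -> it n a = it m a.
  elim: n m a => [//|n IHn] [//|m] a le_nm lt_an /=.
  by apply: F_causal => b lt_ba; apply: IHn => //; apply: leq_trans lt_ba _.
exists (fun a => it (mi_abs a).+1 a) => a /=.
apply: F_causal => b lt_ba; change (it (mi_abs a) b = it (mi_abs b).+1 b).
by symmetry; apply: it_stable.
Qed.

End MultiIndex.

Section SumBelow.
Variables (R : nzRingType) (p : nat).

(* The bound [N] only provides a finite index type for the [b <= a]; it is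
   irrelevant once every [a i <= N]. *)
Definition sum_below N (a : mi p) (G : mi p -> R) :=
  \sum_(b : {ffun 'I_p -> 'I_N.+1} | mi_le (mi_of b) a) G (mi_of b).

Lemma eq_sum_below N (a : mi p) (G G' : mi p -> R) :
  (forall b, mi_le b a -> G b = G' b) -> sum_below N a G = sum_below N a G'.
Proof. by move=> eqG; apply: eq_bigr => b /eqG. Qed.

Lemma sum_below_widen N M (a : mi p) (G : mi p -> R) :
  (N <= M)%N -> (forall i, a i <= N)%N -> sum_below M a G = sum_below N a G.
Proof.
move=> le_NM aN; have le_NM1 : (N.+1 <= M.+1)%N by [].
pose widen (b : {ffun 'I_p -> 'I_N.+1}) := [ffun i => widen_ord le_NM1 (b i)].
pose narrow (c : {ffun 'I_p -> 'I_M.+1}) := [ffun i => inord (c i) : 'I_N.+1].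
have mi_of_widen b : mi_of (widen b) = mi_of b by apply/ffunP=> i; rewrite !ffunE.
rewrite /sum_below (reindex_onto widen narrow) => [|c /mi_leP ca].
  apply: eq_big => b; last by rewrite mi_of_widen.
  rewrite mi_of_widen; case: (mi_le _ _); rewrite ?andbF ?andbT //.
  by apply/eqP/ffunP=> i; apply: val_inj; rewrite !ffunE /= inordK.
apply/ffunP=> i; apply: val_inj; rewrite !ffunE /= inordK //.
by have := ca i; rewrite ffunE ltnS => /leq_trans; apply.
Qed.

Lemma sum_below_bound N M (a : mi p) (G : mi p -> R) :
  (forall i, a i <= N)%N -> (forall i, a i <= M)%N -> sum_below N a G = sum_below M a G.
Proof.
move=> aN aM; case: (leqP N M) => [le_NM | /ltnW le_MN].
  by rewrite (sum_below_widen G le_NM aN).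
by rewrite (sum_below_widen G le_MN aM).
Qed.

Lemma sum_below_top N (a : mi p) (G : mi p -> R) : (forall i, a i <= N)%N ->
  sum_below N a G =
  G a + \sum_(b : {ffun 'I_p -> 'I_N.+1} | mi_le (mi_of b) a && (mi_of b != a)) G (mi_of b).
Proof.
move=> aN; pose ba : {ffun 'I_p -> 'I_N.+1} := [ffun i => inord (a i)].
have ba_a : mi_of ba = a by apply/ffunP=> i; rewrite !ffunE inordK // ltnS.
rewrite /sum_below (bigD1 ba) /= ba_a; last by apply/mi_leP.
by congr (_ + _); apply: eq_bigl => b; rewrite -ba_a (inj_eq (@mi_of_inj _ _)).
Qed.

Lemma sum_below_bot N (a : mi p) (G : mi p -> R) :
  sum_below N a G =
  G (mi0 p) + \sum_(b : {ffun 'I_p -> 'I_N.+1} | mi_le (mi_of b) a && (mi_of b != mi0 p))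
                G (mi_of b).
Proof.
pose b0 : {ffun 'I_p -> 'I_N.+1} := [ffun i => ord0].
have b0_0 : mi_of b0 = mi0 p by apply/ffunP=> i; rewrite !ffunE.
rewrite /sum_below (bigD1 b0) /= b0_0 ?mi_le0 //.
by congr (_ + _); apply: eq_bigl => b; rewrite -b0_0 (inj_eq (@mi_of_inj _ _)).
Qed.

Lemma sum_between_shift N (a b : mi p) (G : mi p -> R) :
  (forall i, a i <= N)%N -> mi_le b a ->
  \sum_(e : {ffun 'I_p -> 'I_N.+1} | mi_le (mi_of e) a && mi_le b (mi_of e)) G (mi_of e) =
  sum_below N (mi_sub a b) (fun c => G (mi_add b c)).
Proof.
move=> aN /mi_leP ba.
pose shift (c : {ffun 'I_p -> 'I_N.+1}) := [ffun i => inord (b i + c i) : 'I_N.+1].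
pose unshift (e : {ffun 'I_p -> 'I_N.+1}) := [ffun i => inord (e i - b i) : 'I_N.+1].
have shiftE c : mi_le (mi_of c) (mi_sub a b) -> mi_of (shift c) = mi_add b (mi_of c).
  move=> /mi_leP cab; apply/ffunP=> i; rewrite !ffunE inordK //.
  by have := cab i; have := ba i; have := aN i; rewrite !ffunE; move: (a i) (b i) (c i : nat); lia.
rewrite /sum_below (reindex_onto shift unshift) => [|e /andP[_ /mi_leP be]]; last first.
  apply/ffunP=> i; apply: val_inj; have := be i; rewrite /shift /unshift /mi_of !ffunE /= => bei.
  have lt_eb : (e i - b i < N.+1)%N by rewrite (leq_ltn_trans (leq_subr _ _)).
  by rewrite (inordK lt_eb) subnKC // inordK.
have predE c : mi_le (mi_of (shift c)) a && mi_le b (mi_of (shift c)) && (unshift (shift c) == c)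
    = mi_le (mi_of c) (mi_sub a b).
  apply/idP/idP => [/andP[/andP[/mi_leP sa /mi_leP bs] _] | cab].
    apply/mi_leP=> i; have := sa i; have := bs i; have := ltn_ord (c i).
    rewrite /mi_of /shift !ffunE val_inord.
    by case: ifP; move: (a i) (b i) (c i : nat); lia.
  rewrite shiftE //; have /mi_leP := cab; rewrite /mi_of => cab'.
  have bc_le i : (b i + c i <= a i)%N.
    by have := cab' i; have := ba i; rewrite !ffunE; move: (a i) (b i) (c i : nat); lia.
  apply/andP; split; [apply/andP; split|].
  - by apply/mi_leP=> i; rewrite !ffunE.
  - by apply/mi_leP=> i; rewrite !ffunE leq_addr.
  apply/eqP/ffunP=> i; apply: val_inj; rewrite /unshift !ffunE /=.
  have bc_lt : (b i + c i < N.+1)%N by rewrite ltnS (leq_trans (bc_le i) (aN i)).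
  by rewrite (inordK bc_lt) addKn inordK // (leq_ltn_trans (leq_addl _ _) bc_lt).
by rewrite (eq_bigl _ _ predE); apply: eq_bigr => c cab; rewrite shiftE.
Qed.

Lemma sum_below_exchange N (a : mi p) (F : mi p -> mi p -> R) : (forall i, a i <= N)%N ->
  sum_below N a (fun e => sum_below N e (fun b => F b e)) =
  sum_below N a (fun b => sum_below N (mi_sub a b) (fun c => F b (mi_add b c))).
Proof.
move=> aN; rewrite /sum_below (exchange_big_dep (fun b => mi_le (mi_of b) a)) /=.
  by apply: eq_bigr => b ba; rewrite (sum_between_shift (F (mi_of b)) aN ba).
by move=> e b ea be; apply: mi_le_trans be ea.
Qed.

End SumBelow.

Section SeriesRing.
Variables (R : nzRingType) (p : nat) (D : pred (mi p)).
Hypothesis D_coideal : coideal D.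

Lemma coideal_le (a b : mi p) : D a -> mi_le b a -> D b.
Proof. by case: D_coideal => _; apply. Qed.

Lemma coideal0 : D (mi0 p).
Proof. by case: D_coideal => [[a Da] _]; apply: coideal_le Da (mi_le0 a). Qed.

Lemma serMulE (f g : ser R p) a :
  serMul D f g a = if D a then sum_below (mi_abs a) a (fun b => f b * g (mi_sub a b)) else 0.
Proof.
rewrite /serMul /sum_below; case: (D a) => //; apply: eq_big => b.
  by apply: eq_forallb => i; rewrite ffunE.
by move=> _; congr (_ * g _); apply/ffunP=> i; rewrite !ffunE.
Qed.

Lemma inSer_serMul (f g : ser R p) : inSer D (serMul D f g).
Proof. by move=> a /negbTE Da; rewrite serMulE Da. Qed.

Lemma serMulA (f g h : ser R p) : serMul D f (serMul D g h) = serMul D (serMul D f g) h.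
Proof.
apply: functional_extensionality => a; rewrite !serMulE; case Da: (D a) => //.
set N := mi_abs a; have aN i : (a i <= N)%N by apply: mi_le_abs.
transitivity (sum_below N a (fun b =>
    sum_below N (mi_sub a b) (fun c => f b * (g c * h (mi_sub (mi_sub a b) c))))).
  apply: eq_sum_below => b ba; rewrite serMulE (coideal_le Da (mi_sub_le _ _)).
  rewrite (sum_below_bound _ (mi_le_abs _) (fun i => mi_le_abs_le i (mi_sub_le a b))).
  by rewrite /sum_below mulr_sumr.
transitivity (sum_below N a (fun e =>
    sum_below N e (fun b => f b * g (mi_sub e b) * h (mi_sub a e)))); last first.
  apply: eq_sum_below => e ea; rewrite serMulE (coideal_le Da ea).
  by rewrite (sum_below_bound _ (mi_le_abs _) (fun i => mi_le_abs_le i ea)) /sum_below mulr_suml.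
rewrite sum_below_exchange //; apply: eq_sum_below => b _; apply: eq_sum_below => c _.
by rewrite mi_addKsub mi_subDA mulrA.
Qed.

Lemma serMulNl (f g : ser R p) a : serMul D (fun c => - f c) g a = - serMul D f g a.
Proof.
rewrite !serMulE; case: (D a); last by rewrite oppr0.
by rewrite /sum_below -sumrN; apply: eq_bigr => b _; rewrite mulNr.
Qed.

Lemma serMul_sumr (I : finType) (f : ser R p) (G : I -> ser R p) a :
  serMul D f (fun c => \sum_(j : I) G j c) a = \sum_(j : I) serMul D f (G j) a.
Proof.
rewrite serMulE; under eq_bigr => j _ do rewrite serMulE.
case: (D a); last by rewrite big1.
by rewrite /sum_below exchange_big; apply: eq_bigr => b _; rewrite mulr_sumr.
Qed.

Lemma serMul_suml (I : finType) (f : ser R p) (G : I -> ser R p) a :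
  serMul D (fun c => \sum_(j : I) G j c) f a = \sum_(j : I) serMul D (G j) f a.
Proof.
rewrite serMulE; under eq_bigr => j _ do rewrite serMulE.
case: (D a); last by rewrite big1.
by rewrite /sum_below exchange_big; apply: eq_bigr => b _; rewrite mulr_suml.
Qed.

Definition conv_lowl (f g : ser R p) a :=
  \sum_(b : {ffun 'I_p -> 'I_(mi_abs a).+1} | mi_le (mi_of b) a && (mi_of b != a))
     f (mi_of b) * g (mi_sub a (mi_of b)).
Definition conv_lowr (f g : ser R p) a :=
  \sum_(b : {ffun 'I_p -> 'I_(mi_abs a).+1} | mi_le (mi_of b) a && (mi_of b != mi0 p))
     f (mi_of b) * g (mi_sub a (mi_of b)).

Lemma serMulEl (f g : ser R p) a : D a -> serMul D f g a = f a * g (mi0 p) + conv_lowl f g a.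
Proof. by move=> Da; rewrite serMulE Da (sum_below_top _ (mi_le_abs a)) mi_subnn. Qed.

Lemma serMulEr (f g : ser R p) a : D a -> serMul D f g a = f (mi0 p) * g a + conv_lowr f g a.
Proof. by move=> Da; rewrite serMulE Da sum_below_bot mi_sub0. Qed.

Lemma eq_conv_lowl (f f' g : ser R p) a :
  (forall b, (mi_abs b < mi_abs a)%N -> f b = f' b) -> conv_lowl f g a = conv_lowl f' g a.
Proof. by move=> eq_f; apply: eq_bigr => b /andP[ba nba]; rewrite eq_f // mi_abs_ltn. Qed.

Lemma eq_conv_lowr (f g g' : ser R p) a :
  (forall b, (mi_abs b < mi_abs a)%N -> g b = g' b) -> conv_lowr f g a = conv_lowr f g' a.
Proof. by move=> eq_g; apply: eq_bigr => b /andP[ba b0]; rewrite eq_g // mi_abs_sub_ltn. Qed.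

Lemma serMul1l (f : ser R p) : inSer D f -> serMul D (serOne R D) f = f.
Proof.
move=> f_ser; apply: functional_extensionality => a.
case Da: (D a); last by rewrite inSer_serMul ?Da // f_ser ?Da.
rewrite serMulEr // /serOne eqxx coideal0 mul1r /conv_lowr big1 ?addr0 // => b /andP[_].
by move=> /negbTE ->; rewrite mul0r.
Qed.

Lemma serMul1r (f : ser R p) : inSer D f -> serMul D f (serOne R D) = f.
Proof.
move=> f_ser; apply: functional_extensionality => a.
case Da: (D a); last by rewrite inSer_serMul ?Da // f_ser ?Da.
rewrite serMulEl // /serOne eqxx coideal0 mulr1 /conv_lowl big1 ?addr0 // => b /andP[ba].
by rewrite mi_sub_eq0 // => /negbTE ->; rewrite mulr0.
Qed.

Lemma chiM i (f g : ser R p) :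
  chi i (serMul D f g) = serAdd (serMul D (chi i f) g) (serMul D f (chi i g)).
Proof.
apply: functional_extensionality => a; rewrite /chi /serAdd !serMulE.
case: (D a); last by rewrite mulr0 addr0.
rewrite /sum_below mulr_sumr -big_split; apply: eq_bigr => b /mi_leP ba.
rewrite /= !mulr_natl mulrnAl mulrnAr -mulrnDr.
by have := ba i; rewrite !ffunE => bai; rewrite subnKC.
Qed.

Lemma chi_serOne i : chi i (serOne R D) = (fun _ => 0).
Proof.
apply: functional_extensionality => a; rewrite /chi /serOne.
by case: eqP => [-> | _]; rewrite ?ffunE ?mul0r ?mulr0.
Qed.

Lemma chiC i j (f : ser R p) : chi i (chi j f) = chi j (chi i f).
Proof. by apply: functional_extensionality => a; rewrite /chi !mulrA -!natrM mulnC. Qed.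

Lemma chiB_sum (f : ser R p) : chiB f = (fun a => \sum_(i < p) chi i f a).
Proof.
by apply: functional_extensionality => a; rewrite /chiB /chi /mi_abs natr_sum mulr_suml.
Qed.

Lemma chiB_mi0 (f : ser R p) : chiB f (mi0 p) = 0.
Proof. by rewrite /chiB mi_abs0 mul0r. Qed.

Lemma inSer_chi i (f : ser R p) : inSer D f -> inSer D (chi i f).
Proof. by move=> f_ser a Da; rewrite /chi f_ser // mulr0. Qed.

Lemma inSer_chiB (f : ser R p) : inSer D f -> inSer D (chiB f).
Proof. by move=> f_ser a Da; rewrite /chiB f_ser // mulr0. Qed.

(* Both one-sided inverses are solved for degree by degree, [r (mi0 p) = 1]
   making each coefficient a function of those of lower degree. *)
Lemma ser_rinv_exists (r : ser R p) : inU D r ->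
  exists u, inSer D u /\ serMul D r u = serOne R D.
Proof.
move=> [r_ser r0].
pose F (u : ser R p) a := if D a then serOne R D a - conv_lowr r u a else 0.
have [u uE] : exists u, forall a, u a = F u a.
  apply: causal_fixpoint (fun _ => 0) _ => x y a eq_xy.
  by rewrite /F (eq_conv_lowr _ eq_xy).
exists u; split=> [a /negbTE Da | ]; first by rewrite uE /F Da.
apply: functional_extensionality => a; case Da: (D a).
  by rewrite serMulEr // r0 mul1r uE /F Da subrK.
by rewrite inSer_serMul ?Da // /serOne Da andbF.
Qed.

Lemma ser_linv_exists (r : ser R p) : inU D r ->
  exists t, inSer D t /\ serMul D t r = serOne R D.
Proof.
move=> [r_ser r0].
pose F (t : ser R p) a := if D a then serOne R D a - conv_lowl t r a else 0.
have [t tE] : exists t, forall a, t a = F t a.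
  apply: causal_fixpoint (fun _ => 0) _ => x y a eq_xy.
  by rewrite /F (eq_conv_lowl _ eq_xy).
exists t; split=> [a /negbTE Da | ]; first by rewrite tE /F Da.
apply: functional_extensionality => a; case Da: (D a).
  by rewrite serMulEl // r0 mulr1 tE /F Da subrK.
by rewrite inSer_serMul ?Da // /serOne Da andbF.
Qed.

Lemma serInvP (r : ser R p) : inU D r ->
  [/\ inSer D (serInv D r), serMul D r (serInv D r) = serOne R D
    & serMul D (serInv D r) r = serOne R D].
Proof.
move=> r_U; have [u [u_ser ru]] := ser_rinv_exists r_U.
have [t [t_ser tr]] := ser_linv_exists r_U.
have tu : t = u by rewrite -(serMul1r t_ser) -ru serMulA tr serMul1l.
have inv_ex : exists s, inSer D s /\ serMul D r s = serOne R D /\ serMul D s r = serOne R D.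
  by exists u; rewrite -tu in ru u_ser *.
by have [? [? ?]] := epsilon_spec (inhabits (fun _ => 0)) _ inv_ex.
Qed.

End SeriesRing.

Section LogDerivative.
Variables (R : nzRingType) (p : nat) (D : pred (mi p)).
Hypothesis D_coideal : coideal D.
Variable cinv : nat -> R.
Hypothesis cinvK : forall n, cinv n * n.+1%:R = 1.

Lemma natr_inv_mulr n : n.+1%:R * cinv n = 1.
Proof. by rewrite -(commr_nat (cinv n)) cinvK. Qed.

Lemma ser_eq_by_degree (x y : ser R p) : inSer D x -> inSer D y -> x (mi0 p) = y (mi0 p) ->
  (forall a, D a -> a != mi0 p -> (forall b, (mi_abs b < mi_abs a)%N -> x b = y b) ->
     (mi_abs a)%:R * x a = (mi_abs a)%:R * y a) ->
  x = y.
Proof.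
move=> x_ser y_ser xy0 step; apply: functional_extensionality; apply: mi_abs_ind => a IH.
case Da: (D a); last by rewrite x_ser ?y_ser ?Da.
have [-> // | a0] := eqVneq a (mi0 p).
have := step a Da a0 IH; rewrite -(mi_abs_prednK a0) => /(congr1 (GRing.mul (cinv (mi_abs a).-1))).
by rewrite !mulrA cinvK !mul1r.
Qed.

Lemma eps_inSerPlus (r : ser R p) : inSerPlus D (eps D r).
Proof.
split; first exact: inSer_serMul.
rewrite /eps serMulE (coideal0 D_coideal) /sum_below big1 // => b _.
by rewrite mi_sub0l chiB_mi0 mulr0.
Qed.

Lemma eps_i_inSerPlus i (r : ser R p) : inSerPlus D (eps_i D i r).
Proof.
split; first exact: inSer_serMul.
rewrite /eps_i serMulE (coideal0 D_coideal) /sum_below big1 // => b _.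
by rewrite mi_sub0l /chi ffunE mul0r mulr0.
Qed.

Lemma eps_i_eq0 i (r : ser R p) (a : mi p) : a i = 0%N -> eps_i D i r a = 0.
Proof.
move=> ai0; rewrite /eps_i serMulE; case: (D a) => //.
by rewrite /sum_below big1 // => b _; rewrite /chi ffunE ai0 mul0r mulr0.
Qed.

Lemma chi_serInv j (r : ser R p) : inU D r ->
  chi j (serInv D r) = (fun a => - serMul D (serMul D (serInv D r) (chi j r)) (serInv D r) a).
Proof.
move=> r_U; have [s_ser rs sr] := serInvP D_coideal r_U; set s := serInv D r in s_ser rs sr *.
have chi_sr : serMul D (chi j s) r = (fun a => - serMul D s (chi j r) a).
  apply: functional_extensionality => a.
  have := congr1 (fun f => f a) (congr1 (chi j) sr).
  by rewrite chiM chi_serOne /serAdd => /eqP; rewrite addr_eq0 => /eqP.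
rewrite -[chi j s](serMul1r D_coideal (inSer_chi j s_ser)) -rs (serMulA D_coideal) chi_sr.
by apply: functional_extensionality => a; rewrite serMulNl.
Qed.

Lemma eps_i_zero_curvature i j (r : ser R p) : inU D r ->
  serSub (chi j (eps_i D i r)) (chi i (eps_i D j r)) = bracket D (eps_i D i r) (eps_i D j r).
Proof.
move=> r_U; rewrite /eps_i !chiM !chi_serInv //.
apply: functional_extensionality => a; rewrite /bracket /serSub /serAdd.
rewrite !serMulNl -!(serMulA D_coideal) chiC.
by rewrite opprD opprK addrACA subrr addr0 addrC.
Qed.

Lemma epsV_inH (r : ser R p) : inU D r -> inH D (epsV D r).
Proof.
move=> r_U; split; first by move=> i; apply: eps_i_inSerPlus.
by split=> [i a | i j]; [apply: eps_i_eq0 | apply: eps_i_zero_curvature].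
Qed.

Lemma Sigma_epsV (r : ser R p) : Sigma (epsV D r) = eps D r.
Proof.
apply: functional_extensionality => a.
by rewrite /Sigma /epsV /eps /eps_i chiB_sum serMul_sumr.
Qed.

Lemma chiB_serMul_eps (r : ser R p) : inU D r -> chiB r = serMul D r (eps D r).
Proof.
move=> r_U; have [_ rs _] := serInvP D_coideal r_U.
by rewrite /eps (serMulA D_coideal) rs serMul1l //; apply: inSer_chiB; case: r_U.
Qed.

Lemma eps_inj (r r' : ser R p) : inU D r -> inU D r' -> eps D r = eps D r' -> r = r'.
Proof.
move=> r_U r'_U eq_eps; have [r_ser r0] := r_U; have [r'_ser r'0] := r'_U.
apply: ser_eq_by_degree => // [|a Da _ IH]; first by rewrite r0 r'0.
have [_ eps0] := eps_inSerPlus r.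
have := congr1 (fun f => f a) (chiB_serMul_eps r_U).
have := congr1 (fun f => f a) (chiB_serMul_eps r'_U).
rewrite /chiB -eq_eps !serMulEl // eps0 !mulr0 !add0r => -> ->.
exact: eq_conv_lowl.
Qed.

(* Solve |a| r_a = (r e)_a, whose right side only involves r below degree |a|
   because e has no constant term. *)
Lemma eps_surj (e : ser R p) : inSerPlus D e -> exists r, inU D r /\ eps D r = e.
Proof.
move=> [e_ser e0].
pose F (x : ser R p) a :=
  if D a then (if a == mi0 p then 1 else cinv (mi_abs a).-1 * serMul D x e a) else 0.
have [r rE] : exists r, forall a, r a = F r a.
  apply: causal_fixpoint (fun _ => 0) _ => x y a eq_xy; rewrite /F.
  case Da: (D a) => //; case: eqP => // _.
  by rewrite !serMulEl // e0 !mulr0 !add0r (eq_conv_lowl _ eq_xy).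
have r_U : inU D r.
  by split=> [a /negbTE Da | ]; rewrite rE /F ?Da // (coideal0 D_coideal) eqxx.
have chiB_r : chiB r = serMul D r e.
  apply: functional_extensionality => a.
  case Da: (D a); last by rewrite inSer_serMul ?Da // /chiB rE /F Da mulr0.
  have [-> | a0] := eqVneq a (mi0 p).
    rewrite chiB_mi0 serMulE (coideal0 D_coideal) /sum_below big1 // => b _.
    by rewrite mi_sub0l e0 mulr0.
  by rewrite /chiB rE /F Da (negbTE a0) mulrA -{1}(mi_abs_prednK a0) natr_inv_mulr mul1r.
exists r; split => //; have [_ _ sr] := serInvP D_coideal r_U.
by rewrite /eps chiB_r (serMulA D_coideal) sr serMul1l.
Qed.

Lemma eps_bij : bij_on (@inU R p D) (inSerPlus D) (eps D).
Proof.
by split; [move=> r _; apply: eps_inSerPlus | split; [apply: eps_inj | apply: eps_surj]].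
Qed.

Lemma inSerPlus_Sigma (d : 'I_p -> ser R p) :
  (forall i, inSerPlus D (d i)) -> inSerPlus D (Sigma d).
Proof.
move=> d_plus; rewrite /Sigma; split=> [a Da | ]; apply: big1 => i _.
  by case: (d_plus i) => d_ser _; apply: d_ser.
by case: (d_plus i).
Qed.

(* Sum the zero-curvature equations over [j]. *)
Lemma inH_chiB (d : 'I_p -> ser R p) i (a : mi p) : inH D d ->
  (mi_abs a)%:R * d i a =
  (a i)%:R * Sigma d a + (serMul D (d i) (Sigma d) a - serMul D (Sigma d) (d i) a).
Proof.
move=> [_ [_ curv]].
have sum_curv : \sum_(j < p) ((a j)%:R * d i a - (a i)%:R * d j a) =
                \sum_(j < p) (serMul D (d i) (d j) a - serMul D (d j) (d i) a).
  by apply: eq_bigr => j _; have := congr1 (fun f => f a) (curv i j).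
move: sum_curv; rewrite !sumrB -mulr_suml -natr_sum -mulr_sumr -serMul_sumr -serMul_suml.
by rewrite /Sigma /mi_abs => <-; rewrite addrC subrK.
Qed.

Lemma Sigma_inj (d d' : 'I_p -> ser R p) :
  inH D d -> inH D d' -> Sigma d = Sigma d' -> d = d'.
Proof.
move=> d_H d'_H eq_Sigma; apply: functional_extensionality => i.
have [[di_ser di0] _] := (proj1 d_H i, proj1 d'_H i).
have [d'i_ser d'i0] := proj1 d'_H i.
have [_ S0] := inSerPlus_Sigma (proj1 d_H).
apply: ser_eq_by_degree => // [|a Da _ IH]; first by rewrite di0 d'i0.
rewrite (inH_chiB i a d_H) (inH_chiB i a d'_H) -eq_Sigma.
rewrite (serMulEl (d i) _ Da) (serMulEl (d' i) _ Da) (serMulEr _ (d i) Da).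
rewrite (serMulEr _ (d' i) Da) S0 !mulr0 !mul0r !add0r.
by rewrite (eq_conv_lowl _ IH) (eq_conv_lowr _ IH).
Qed.

End LogDerivative.

Lemma bij_on_factor (X Y Z : Type) (A : X -> Prop) (B : Y -> Prop) (C : Z -> Prop)
    (f : X -> Y) (g : Y -> Z) (h : X -> Z) :
  (forall x, A x -> B (f x)) -> (forall y, B y -> C (g y)) ->
  (forall x, A x -> g (f x) = h x) ->
  (forall y y', B y -> B y' -> g y = g y' -> y = y') ->
  bij_on A C h -> bij_on A B f /\ bij_on B C g.
Proof.
move=> fAB gBC gf_h g_inj [_ [h_inj h_surj]].
split; split=> //; split.
- by move=> x x' Ax Ax' eq_f; apply: h_inj => //; rewrite -!gf_h // eq_f.
- move=> y By; have [x [Ax hx]] := h_surj _ (gBC _ By).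
  by exists x; split=> //; apply: g_inj => //; [apply: fAB | rewrite gf_h].
- exact: g_inj.
- by move=> z Cz; have [x [Ax <-]] := h_surj _ Cz; exists (f x); rewrite gf_h; auto.
Qed.

Lemma algebra_natr_linv (k : comNzRingType) (R : algType k) :
  (forall n : nat, exists x : k, x * n.+1%:R = 1) ->
  exists cinv : nat -> R, forall n, cinv n * n.+1%:R = 1.
Proof.
move=> k_inv; have k_inv' n : exists x : k, x * n.+1%:R == 1.
  by have [x xn] := k_inv n; exists x; apply/eqP.
exists (fun n => xchoose (k_inv' n) *: 1) => n.
by rewrite -scalerAl mul1r -scaler_nat scalerA (eqP (xchooseP (k_inv' n))) scale1r.
Qed.

Theorem mainTheorem6 (k : comNzRingType) (R : algType k) (p : nat) (D : pred (mi p)) :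
  coideal D ->
  (forall n : nat, exists x : k, x * (n.+1)%:R = 1) ->
  (forall r : ser R p, inU D r -> inSerPlus D (eps D r)) /\
  (forall r : ser R p, inU D r -> inH D (epsV D r)) /\
  (forall r : ser R p, inU D r -> Sigma (epsV D r) = eps D r) /\
  bij_on (@inU R p D) (inH D) (epsV D) /\
  bij_on (@inU R p D) (@inSerPlus R p D) (eps D) /\
  bij_on (@inH R p D) (inSerPlus D) (@Sigma R p).
Proof.
move=> D_coideal k_inv; have [cinv cinvK] := algebra_natr_linv R k_inv.
have eps_bijective := eps_bij D_coideal cinvK.
have [epsV_bij Sigma_bij] := bij_on_factor (epsV_inH D_coideal)
  (fun d d_H => inSerPlus_Sigma (proj1 d_H)) (fun r _ => Sigma_epsV D r)
  (Sigma_inj cinvK) eps_bijective.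
split; first by move=> r _; apply: eps_inSerPlus.
split; first exact: epsV_inH.
by split; first by move=> r _; apply: Sigma_epsV.
Qed.
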